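(* In the abstract boundary problem setting with an invertible reference operator described in the context, for all $u,v\in\mathcal D(T^* )$, $$\langle T^*u,v\rangle-\langle u,T^*v\rangle=\langle\bm\Gamma_1u,\Gamma_0v\rangle_{K,K'}-\langle\Gamma_0u,\bm\Gamma_1v\rangle_{K',K}.$$ (Here $\bm\Gamma_1u,\bm\Gamma_1v\in K$.)
   Context: Inner products are linear in the first argument and conjugate-linear in the second. Let $H_0$ be a separable Hilbert space with inner product $\langle\cdot,\cdot\rangle$, let $T$ be a closed densely defined symmetric operator in $H_0$ with adjoint $T^*$, and equip $\mathcal D(T^* )$ with the graph norm. Let $H_1\subset H_0$ be a dense subspace which is a Hilbert space in its own right with bounded inclusion $H_1\to H_0$. Let $K^\partial$ be a separable Hilbert space with inner product $\langle\cdot,\cdot\rangle_\partial$ and $K\subset K^\partial$ a dense subspace which is a Hilbert space in its own right with bounded inclusion. Let $K'$ be the space of continuous anti-linear functionals on $K$ (a Hilbert space with the dual norm); $K^\partial$ is regarded as a dense subspace of $K'$ via $y\mapsto(x\mapsto\langle y,x\rangle_\partial)$, so $K\subset K^\partial\subset K'$. For $y\in K'$, $x\in K$ put $\langle y,x\rangle_{K',K}=y(x)$ and $\langle x,y\rangle_{K,K'}=\overline{y(x)}$; these agree with $\langle\cdot,\cdot\rangle_\partial$ when $y\in K^\partial$. Standing assumptions: $H_1\subset\mathcal D(T^* )$ and $H_1$ is dense in $\mathcal D(T^* )$ in the graph norm; $T^*|_{H_1}:H_1\to H_0$ is bounded; $\gamma_0,\gamma_1:H_1\to K$ are bounded linear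 operators such that $\gamma=\gamma_0\oplus\gamma_1:H_1\to K\oplus K$ is surjective; $\operatorname{Ker}\gamma$ is dense in $H_0$ and $\mathcal D(T)=\operatorname{Ker}\gamma$; and the Lagrange identity $\langle T^*u,v\rangle-\langle u,T^*v\rangle=\langle\gamma_1u,\gamma_0v\rangle_\partial-\langle\gamma_0u,\gamma_1v\rangle_\partial$ holds for all $u,v\in H_1$. $\Gamma_0,\Gamma_1:\mathcal D(T^* )\to K'$ denote the (existing, unique) continuous extensions of $\gamma_0,\gamma_1$; they satisfy $\langle T^*u,v\rangle-\langle u,T^*v\rangle=\langle\Gamma_1u,\Gamma_0v\rangle_{K',K}-\langle\Gamma_0u,\Gamma_1v\rangle_{K',K}$ for $u\in\mathcal D(T^* )$, $v\in H_1$. Moreover $A$ is a self-adjoint operator in $H_0$ with $T\subset A\subset T^*$, $\mathcal D(A)=\operatorname{Ker}\gamma_0$ (so $\mathcal D(A)\subset H_1$), and $A$ has a bounded everywhere defined inverse. Then $\mathcal D(T^* )=\mathcal D(A)\dotplus\operatorname{Ker}T^*$ topologically, with projections $p=A^{-1}T^*$ onto $\mathcal D(A)$ and $k=1-p$ onto $\operatorname{Ker}T^*$, and $\Gamma_0$ restricts to a topological isomorphism $\operatorname{Ker}T^*\to K'$; let $\bm\gamma(0):K'\to\operatorname{Ker}T^*$ be its inverse, $M(0)=\Gamma_1\circ\bm\gamma(0):K'\to K'$, and define the reduced boundary operator $\bm\Gamma_1=\Gamma_1-M(0)\circ\Gamma_0:\mathcal D(T^* )\to K'$. *)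

From HB Require Import structures.
From mathcomp Require Import all_boot all_order all_algebra.
From mathcomp Require Export complex.
From mathcomp Require Export reals.
Set Implicit Arguments. Unset Strict Implicit. Unset Printing Implicit Defensive.
Import Order.TTheory GRing.Theory Num.Theory.
Local Open Scope ring_scope.

Section Hilbert.
Variable C : numClosedFieldType.

Definition subspace (V : lmodType C) (D : V -> Prop) : Prop :=
  D 0 /\ forall (a : C) (x y : V), D x -> D y -> D (a *: x + y).

Definition linear_map (V W : lmodType C) (f : V -> W) : Prop :=
  forall (a : C) (x y : V), f (a *: x + y) = a *: f x + f y.

Definition ipnorm (V : lmodType C) (ip : V -> V -> C) (x : V) : C :=
  sqrtC (ip x x).

Definition cvg_seq (V : lmodType C) (ip : V -> V -> C) (s : nat -> V) (l : V) :=
  forall eps : C, 0 < eps -> exists N : nat,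
      forall n, (N <= n)%N -> ipnorm ip (s n - l) < eps.

Definition cauchy_seq (V : lmodType C) (ip : V -> V -> C) (s : nat -> V) :=
  forall eps : C, 0 < eps -> exists N : nat,
      forall m n, (N <= m)%N -> (N <= n)%N -> ipnorm ip (s m - s n) < eps.

Definition is_hilbert (V : lmodType C) (ip : V -> V -> C) : Prop :=
  [/\ (forall (a : C) (x y z : V), ip (a *: x + y) z = a * ip x z + ip y z),
      (forall x y : V, ip y x = (ip x y)^*),
      (forall x : V, 0 <= ip x x),
      (forall x : V, ip x x = 0 -> x = 0) &
      (forall s : nat -> V, cauchy_seq ip s -> exists l, cvg_seq ip s l)].

Definition separable (V : lmodType C) (ip : V -> V -> C) : Prop :=
  exists d : nat -> V, forall (x : V) (eps : C), 0 < eps ->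
      exists n, ipnorm ip (x - d n) < eps.

Definition dense_in (V : lmodType C) (nrm : V -> C) (D E : V -> Prop) : Prop :=
  forall x : V, E x -> forall eps : C, 0 < eps ->
      exists y, D y /\ nrm (x - y) < eps.

Definition bounded_map (V W : lmodType C) (n1 : V -> C) (n2 : W -> C)
  (f : V -> W) : Prop :=
  exists M : C, forall x, n2 (f x) <= M * n1 x.

Definition closed_op (V : lmodType C) (ip : V -> V -> C)
  (D : V -> Prop) (T : V -> V) : Prop :=
  forall (s : nat -> V) (x y : V), (forall n, D (s n)) ->
    cvg_seq ip s x -> cvg_seq ip (fun n => T (s n)) y -> D x /\ T x = y.

Definition symmetric_op (V : lmodType C) (ip : V -> V -> C)
  (D : V -> Prop) (T : V -> V) : Prop :=
  forall u v, D u -> D v -> ip (T u) v = ip u (T v).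

Definition is_adjoint (V : lmodType C) (ip : V -> V -> C)
  (D : V -> Prop) (T : V -> V) (Ds : V -> Prop) (Ts : V -> V) : Prop :=
  (forall u, Ds u <-> exists w, forall v, D v -> ip (T v) u = ip v w) /\
  (forall u, Ds u -> forall v, D v -> ip (T v) u = ip v (Ts u)).

(* continuous anti-linear functionals on (K, ipK): the elements of K' *)
Definition antidual (K : lmodType C) (ipK : K -> K -> C) (f : K -> C) : Prop :=
  (forall (a : C) (x y : K), f (a *: x + y) = a^* * f x + f y) /\
  exists M : C, forall x, `|f x| <= M * ipnorm ipK x.

End Hilbert.

(* Every u in D(T* ) splits as u = γ(0)Γ0 u + p_u with p_u = A^-1 T* u ∈ D(A) = Ker γ0,
   because u - p_u lies in Ker T* and has the same Γ0-trace as u.  On this splitting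
   the reduced trace is bΓ1 u = γ1 p_u ∈ K.  Green's formula then follows from the
   extended Lagrange identity applied to (u, p_v) and to (γ(0)Γ0 v, p_u); in both
   cases the Γ1-term is paired with γ0 p = 0 and drops out. *)
From HB Require Import structures.
From mathcomp Require Import all_boot all_order all_algebra.
From mathcomp Require Import complex reals.
From Stdlib Require Import FunctionalExtensionality.
Set Implicit Arguments. Unset Strict Implicit.
Import Order.TTheory GRing.Theory Num.Theory.
Local Open Scope ring_scope.

Section InnerProduct.
Variables (C : numClosedFieldType) (V : lmodType C) (ip : V -> V -> C).
Hypothesis hip : is_hilbert ip.

Lemma ip0l z : ip 0 z = 0.
Proof.
have [ipl _ _ _ _] := hip; apply: (@addrI _ (ip 0 z)).
by rewrite addr0 -{1}[ip 0 z]mul1r -ipl scale1r addr0.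
Qed.

Lemma ipDl x y z : ip (x + y) z = ip x z + ip y z.
Proof. by have [ipl _ _ _ _] := hip; rewrite -[x in LHS]scale1r ipl mul1r. Qed.

Lemma ipZl a x z : ip (a *: x) z = a * ip x z.
Proof. by have [ipl _ _ _ _] := hip; rewrite -[a *: x]addr0 ipl ip0l addr0. Qed.

Lemma ipNl x z : ip (- x) z = - ip x z.
Proof. by rewrite -scaleN1r ipZl mulN1r. Qed.

Lemma ipDr x y z : ip z (x + y) = ip z x + ip z y.
Proof. by have [_ ipC _ _ _] := hip; rewrite !(ipC _ z) ipDl rmorphD. Qed.

Lemma ipZr a x z : ip z (a *: x) = a^* * ip z x.
Proof. by have [_ ipC _ _ _] := hip; rewrite !(ipC _ z) ipZl rmorphM. Qed.

Lemma ipNr x z : ip z (- x) = - ip z x.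
Proof. by rewrite -scaleN1r ipZr rmorphN rmorph1 mulN1r. Qed.

Lemma dense_orthogonal_eq0 (D : V -> Prop) d :
  dense_in (ipnorm ip) D (fun _ => True) -> (forall y, D y -> ip y d = 0) -> d = 0.
Proof.
move=> hD d_orth; have [_ ipC ip_ge0 ip_def _] := hip.
apply: ip_def; apply/eqP; apply: contraT => d_neq0.
have d_gt0 : 0 < ip d d by rewrite lt_def d_neq0 ip_ge0.
have sqrt_gt0 : 0 < sqrtC (ip d d) by rewrite sqrtC_gt0.
have [y [Dy]] := hD d I _ sqrt_gt0.
have pyth : ip (d - y) (d - y) = ip d d + ip y y.
  by rewrite ipDl !ipDr !ipNl !ipNr opprK (ipC y d) (d_orth y Dy) conjC0 !oppr0 !add0r addr0.
rewrite /ipnorm pyth ltr_sqrtC ?qualifE /= ?addr_ge0 //.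
by rewrite gtrDl => /(le_lt_trans (ip_ge0 y)); rewrite ltxx.
Qed.

End InnerProduct.

Lemma linear_map0 (C : numClosedFieldType) (V W : lmodType C) (f : V -> W) :
  linear_map f -> f 0 = 0.
Proof.
move=> f_lin; apply: (@addrI _ (f 0)).
by rewrite addr0 -{1}[f 0]scale1r -f_lin scale1r addr0.
Qed.

Lemma linear_mapB (C : numClosedFieldType) (V W : lmodType C) (f : V -> W) :
  linear_map f -> forall x y, f (x - y) = f x - f y.
Proof. by move=> f_lin x y; rewrite -scaleN1r addrC f_lin scaleN1r addrC. Qed.

Lemma antidual0 (C : numClosedFieldType) (V : lmodType C) (ip : V -> V -> C) f :
  antidual ip f -> f 0 = 0.
Proof.
case=> f_alin _; apply: (@addrI _ (f 0)).
by rewrite addr0 -{1}[f 0]mul1r -conjC1 -f_alin scale1r addr0.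
Qed.

Lemma adjoint_linear (C : numClosedFieldType) (V : lmodType C) (ip : V -> V -> C)
    D T Ds Ts :
  is_hilbert ip -> dense_in (ipnorm ip) D (fun _ => True) ->
  is_adjoint ip D T Ds Ts -> forall a u w, Ds u -> Ds w ->
  Ds (a *: u + w) /\ Ts (a *: u + w) = a *: Ts u + Ts w.
Proof.
move=> hip hD [Ds_def Ts_def] a u w Du Dw.
have adj_comb v : D v -> ip (T v) (a *: u + w) = ip v (a *: Ts u + Ts w).
  by move=> Dv; rewrite !(ipDr hip) !(ipZr hip) Ts_def ?Ts_def.
have Dcomb : Ds (a *: u + w) by apply/Ds_def; exists (a *: Ts u + Ts w).
split=> //; apply/eqP; rewrite -subr_eq0; apply/eqP.
apply: (dense_orthogonal_eq0 hip hD) => v Dv.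
by rewrite (ipDr hip) (ipNr hip) -Ts_def // adj_comb // subrr.
Qed.

Section ReducedGreenFormula.
Variables (C : numClosedFieldType) (H0 H1 K Kd : lmodType C).
Variables (ip0 : H0 -> H0 -> C) (ipK : K -> K -> C) (ipd : Kd -> Kd -> C).
Hypotheses (hH0 : is_hilbert ip0) (hKd : is_hilbert ipd).
Variables (Ds : H0 -> Prop) (Ts : H0 -> H0).
Hypothesis Ts_lin : forall a u w, Ds u -> Ds w ->
  Ds (a *: u + w) /\ Ts (a *: u + w) = a *: Ts u + Ts w.
Variables (iota : H1 -> H0) (g0 g1 : H1 -> K) (jK : K -> Kd).
Hypotheses (hj_lin : linear_map jK) (hj_inj : injective jK).
Hypothesis hH1D : forall h, Ds (iota h).
Variables (G0 G1 : H0 -> K -> C).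
Hypotheses (hG0K' : forall u, Ds u -> antidual ipK (G0 u))
           (hG1K' : forall u, Ds u -> antidual ipK (G1 u)).
Hypotheses
  (hG0lin : forall a u v, Ds u -> Ds v -> G0 (a *: u + v) = (fun x => a * G0 u x + G0 v x))
  (hG1lin : forall a u v, Ds u -> Ds v -> G1 (a *: u + v) = (fun x => a * G1 u x + G1 v x)).
Hypotheses (hG0ext : forall h, G0 (iota h) = (fun x => ipd (jK (g0 h)) (jK x)))
           (hG1ext : forall h, G1 (iota h) = (fun x => ipd (jK (g1 h)) (jK x))).
Hypothesis hLagG : forall u v, Ds u ->
  ip0 (Ts u) (iota v) - ip0 u (Ts (iota v)) = G1 u (g0 v) - G0 u (g1 v).
Variables (DA : H0 -> Prop) (A Ainv : H0 -> H0).
Hypotheses (hATs : forall x, DA x -> Ds x /\ Ts x = A x)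
           (hDAker : forall x, DA x <-> exists h, x = iota h /\ g0 h = 0)
           (hAinv_r : forall x, DA (Ainv x) /\ A (Ainv x) = x).
Variable gam0 : (K -> C) -> H0.
Hypotheses (hgam0 : forall phi, antidual ipK phi ->
               Ds (gam0 phi) /\ Ts (gam0 phi) = 0 /\ G0 (gam0 phi) = phi)
           (hgam0' : forall u, Ds u -> Ts u = 0 -> gam0 (G0 u) = u).

Lemma G0_ker_g0 h : g0 h = 0 -> G0 (iota h) = (fun _ => 0).
Proof.
move=> g0h; rewrite hG0ext g0h (linear_map0 hj_lin).
by apply: functional_extensionality => x; rewrite ip0l.
Qed.

Lemma Ts_add_kerTs k h : Ds k -> Ts k = 0 -> Ts (k + iota h) = Ts (iota h).
Proof.
move=> Dk Tk; have [_] := Ts_lin 1 Dk (hH1D h).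
by rewrite !scale1r Tk add0r.
Qed.

Lemma adjoint_dom_decomp u : Ds u -> exists h, g0 h = 0 /\ u = gam0 (G0 u) + iota h.
Proof.
move=> Du; have [DAp Ap] := hAinv_r (Ts u); set p := Ainv (Ts u) in DAp Ap *.
have [Dp Tp] := hATs DAp; have [h [ep g0h]] := (hDAker p).1 DAp.
exists h; split=> //; rewrite -ep.
have [Dw Tw] := Ts_lin (-1) Dp Du.
have Tw0 : Ts ((-1) *: p + u) = 0 by rewrite Tw Tp Ap scaleN1r addNr.
have G0w : G0 ((-1) *: p + u) = G0 u.
  rewrite hG0lin // ep G0_ker_g0 //.
  by apply: functional_extensionality => x; rewrite mulr0 add0r.
by rewrite -{1}G0w hgam0' // scaleN1r addrAC addNr add0r.
Qed.

Lemma reduced_G1_decomp u h : Ds u -> u = gam0 (G0 u) + iota h ->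
  (fun x => G1 u x - G1 (gam0 (G0 u)) x) = (fun x => ipd (jK (g1 h)) (jK x)).
Proof.
move=> Du eu; have [Dk _] := hgam0 (hG0K' Du).
have := hG1lin 1 Dk (hH1D h); rewrite scale1r -eu hG1ext => ->.
by apply: functional_extensionality => x; rewrite mul1r addrAC subrr add0r.
Qed.

Lemma embK_inj a c :
  (fun x => ipd (jK a) (jK x)) = (fun x => ipd (jK c) (jK x)) -> a = c.
Proof.
move=> /(congr1 (fun f => f (a - c))) /eqP; rewrite -subr_eq0.
rewrite -(ipNl hKd) -(ipDl hKd) -(linear_mapB hj_lin) => /eqP.
have [_ _ _ ip_def _] := hKd.
move/ip_def; rewrite -(linear_map0 hj_lin) => /hj_inj /eqP.
by rewrite subr_eq0 => /eqP.
Qed.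

Lemma green_decomp u v k k' h h' :
  Ds k -> Ds k' -> Ts k = 0 -> Ts k' = 0 -> g0 h = 0 -> g0 h' = 0 ->
  u = k + iota h -> v = k' + iota h' ->
  ip0 (Ts u) v - ip0 u (Ts v) = (G0 v (g1 h))^* - G0 u (g1 h').
Proof.
move=> Dk Dk' Tk Tk' g0h g0h' -> ->.
have Du : Ds (k + iota h) by rewrite -[k]scale1r; exact: (Ts_lin 1 Dk (hH1D h)).1.
have [_ ipC _ _ _] := hH0.
have lag_u := hLagG h' Du.
rewrite Ts_add_kerTs // g0h' (antidual0 (hG1K' Du)) sub0r in lag_u.
have lag_k' := hLagG h Dk'.
rewrite Tk' ip0l // g0h (antidual0 (hG1K' Dk')) !sub0r in lag_k'.
have G0v : G0 (k' + iota h') (g1 h) = G0 k' (g1 h).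
  have := hG0lin 1 Dk' (hH1D h'); rewrite scale1r => ->.
  by rewrite G0_ker_g0 // mul1r addr0.
by rewrite G0v !Ts_add_kerTs // (ipDr hH0) -addrA lag_u (ipC k') (oppr_inj lag_k').
Qed.

End ReducedGreenFormula.

Theorem lemma4p8
  (R : realType)
  (* H0 *)
  (H0 : lmodType R[i]) (ip0 : H0 -> H0 -> R[i])
  (hH0 : is_hilbert ip0) (sH0 : separable ip0)
  (* T and its adjoint Tstar *)
  (DT : H0 -> Prop) (T : H0 -> H0) (Ds : H0 -> Prop) (Ts : H0 -> H0)
  (hDT : subspace DT) (hTlin : forall a x y, DT x -> DT y -> T (a *: x + y) = a *: T x + T y)
  (hDTdense : dense_in (ipnorm ip0) DT (fun _ => True))
  (hTclosed : closed_op ip0 DT T) (hTsym : symmetric_op ip0 DT T)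
  (hadj : is_adjoint ip0 DT T Ds Ts)
  (* H1, a Hilbert space continuously and densely embedded in H0 *)
  (H1 : lmodType R[i]) (ip1 : H1 -> H1 -> R[i]) (hH1 : is_hilbert ip1)
  (iota : H1 -> H0) (hiota_lin : linear_map iota) (hiota_inj : injective iota)
  (hiota_bd : bounded_map (ipnorm ip1) (ipnorm ip0) iota)
  (hiota_dense : dense_in (ipnorm ip0) (fun x => exists h, x = iota h) (fun _ => True))
  (* K^∂ and K, K densely and continuously embedded in K^∂ *)
  (Kd : lmodType R[i]) (ipd : Kd -> Kd -> R[i]) (hKd : is_hilbert ipd) (sKd : separable ipd)
  (K : lmodType R[i]) (ipK : K -> K -> R[i]) (hK : is_hilbert ipK)
  (jK : K -> Kd) (hj_lin : linear_map jK) (hj_inj : injective jK)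
  (hj_bd : bounded_map (ipnorm ipK) (ipnorm ipd) jK)
  (hj_dense : dense_in (ipnorm ipd) (fun y => exists x, y = jK x) (fun _ => True))
  (* standing assumptions *)
  (hH1D : forall h, Ds (iota h))
  (hH1dense : dense_in (fun u => sqrtC (ip0 u u + ip0 (Ts u) (Ts u)))
                (fun u => exists h, u = iota h) Ds)
  (hTsH1 : bounded_map (ipnorm ip1) (ipnorm ip0) (fun h => Ts (iota h)))
  (g0 g1 : H1 -> K) (hg0lin : linear_map g0) (hg1lin : linear_map g1)
  (hg0bd : bounded_map (ipnorm ip1) (ipnorm ipK) g0)
  (hg1bd : bounded_map (ipnorm ip1) (ipnorm ipK) g1)
  (hgsurj : forall a b : K, exists h, g0 h = a /\ g1 h = b)
  (hkerdense : dense_in (ipnorm ip0) (fun x => exists h, x = iota h /\ g0 h = 0 /\ g1 h = 0)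
                 (fun _ => True))
  (hDTker : forall x, DT x <-> exists h, x = iota h /\ g0 h = 0 /\ g1 h = 0)
  (hLag : forall u v : H1,
      ip0 (Ts (iota u)) (iota v) - ip0 (iota u) (Ts (iota v)) =
      ipd (jK (g1 u)) (jK (g0 v)) - ipd (jK (g0 u)) (jK (g1 v)))
  (* Γ0, Γ1 : D(Tstar) -> K', the continuous extensions of γ0, γ1 *)
  (G0 G1 : H0 -> (K -> R[i]))
  (hG0K' : forall u, Ds u -> antidual ipK (G0 u))
  (hG1K' : forall u, Ds u -> antidual ipK (G1 u))
  (hG0lin : forall a u v, Ds u -> Ds v -> G0 (a *: u + v) = (fun x => a * G0 u x + G0 v x))
  (hG1lin : forall a u v, Ds u -> Ds v -> G1 (a *: u + v) = (fun x => a * G1 u x + G1 v x))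
  (hG0bd : exists M, forall u, Ds u -> forall x,
      `|G0 u x| <= M * sqrtC (ip0 u u + ip0 (Ts u) (Ts u)) * ipnorm ipK x)
  (hG1bd : exists M, forall u, Ds u -> forall x,
      `|G1 u x| <= M * sqrtC (ip0 u u + ip0 (Ts u) (Ts u)) * ipnorm ipK x)
  (hG0ext : forall h, G0 (iota h) = (fun x => ipd (jK (g0 h)) (jK x)))
  (hG1ext : forall h, G1 (iota h) = (fun x => ipd (jK (g1 h)) (jK x)))
  (hLagG : forall u v, Ds u ->
      ip0 (Ts u) (iota v) - ip0 u (Ts (iota v)) = G1 u (g0 v) - G0 u (g1 v))
  (* the reference operator A *)
  (DA : H0 -> Prop) (A : H0 -> H0)
  (hDA : subspace DA) (hAlin : forall a x y, DA x -> DA y -> A (a *: x + y) = a *: A x + A y)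
  (hAdense : dense_in (ipnorm ip0) DA (fun _ => True))
  (hAsa : is_adjoint ip0 DA A DA A)
  (hTA : forall x, DT x -> DA x /\ A x = T x)
  (hATs : forall x, DA x -> Ds x /\ Ts x = A x)
  (hDAker : forall x, DA x <-> exists h, x = iota h /\ g0 h = 0)
  (Ainv : H0 -> H0) (hAinv_lin : linear_map Ainv)
  (hAinv_bd : bounded_map (ipnorm ip0) (ipnorm ip0) Ainv)
  (hAinv_r : forall x, DA (Ainv x) /\ A (Ainv x) = x)
  (hAinv_l : forall x, DA x -> Ainv (A x) = x)
  (* γ(0) : K' -> Ker Tstar, inverse of Γ0 restricted to Ker Tstar *)
  (gam0 : (K -> R[i]) -> H0)
  (hgam0 : forall phi, antidual ipK phi ->
      Ds (gam0 phi) /\ Ts (gam0 phi) = 0 /\ G0 (gam0 phi) = phi)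
  (hgam0' : forall u, Ds u -> Ts u = 0 -> gam0 (G0 u) = u) :
  let M0 := fun phi : K -> R[i] => G1 (gam0 phi) in
  let bG1 := fun u : H0 => (fun x : K => G1 u x - M0 (G0 u) x) in
  let embK := fun a : K => (fun x : K => ipd (jK a) (jK x)) in
  (forall u, Ds u -> exists a : K, bG1 u = embK a) /\
  (forall (u v : H0) (a b : K), Ds u -> Ds v -> bG1 u = embK a -> bG1 v = embK b ->
     ip0 (Ts u) v - ip0 u (Ts v) = (G0 v a)^* - G0 u b).
Proof.
move=> M0 bG1 embK.
have Ts_lin := adjoint_linear hH0 hDTdense hadj.
have decomp :=
  adjoint_dom_decomp hKd Ts_lin hj_lin hG0lin hG0ext hATs hDAker hAinv_r hgam0'.
have reduced_G1 := reduced_G1_decomp hH1D hG0K' hG1lin hG1ext hgam0.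
have green := green_decomp hH0 hKd Ts_lin hj_lin hH1D hG1K' hG0lin hG0ext hLagG.
have embK_injective := embK_inj hKd hj_lin hj_inj.
split=> [u Du | u v a b Du Dv bG1u bG1v].
  have [h [_ eu]] := decomp u Du.
  by exists (g1 h); exact: reduced_G1 Du eu.
have [h [g0h eu]] := decomp u Du; have [h' [g0h' ev]] := decomp v Dv.
have -> : a = g1 h by apply: embK_injective; rewrite -(reduced_G1 _ _ Du eu); exact: esym bG1u.
have -> : b = g1 h' by apply: embK_injective; rewrite -(reduced_G1 _ _ Dv ev); exact: esym bG1v.
have [Dk [Tk _]] := hgam0 _ (hG0K' u Du); have [Dk' [Tk' _]] := hgam0 _ (hG0K' v Dv).
exact: green Dk Dk' Tk Tk' g0h g0h' eu ev.
Qed.
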